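(* Let $G$ be a simple connected graph with at least two vertices, and let $f$ be a harmonic eigenfunction for $\lambda_1$ of $G$. Let $u,v$ be vertices with $f(u)\le f(z)\le f(v)$ for all $z\in V(G)$. Define \[ \mathrm{vol}_P=\sum_{z:\,f(z)\ge 0} d(z),\qquad \mathrm{vol}_N=\sum_{z:\,f(z)<0} d(z). \] Then \[ \lambda_1(G)\ge \frac{2}{\mathrm{dist}(u,v)\sqrt{\mathrm{vol}_P\cdot\mathrm{vol}_N}}. \]
   Context: For a connected simple graph $G$ with degree function $d$, the normalized Laplacian spectral gap is \[ \lambda_1=\inf_{f\neq 0,\ \sum_u f(u)d(u)=0}\frac{\sum_{u\sim v}(f(u)-f(v))^2}{\sum_v f(v)^2 d(v)}, \] where the numerator sums over edges. A harmonic eigenfunction for $\lambda_1$ is a nonzero function $f:V(G)\to\mathbb{R}$ with $\sum_u f(u)d(u)=0$ that attains this infimum. Here $\mathrm{dist}(u,v)$ is the graph distance. *)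

From HB Require Import structures.
From mathcomp Require Import all_boot all_order all_algebra.
Set Implicit Arguments. Unset Strict Implicit. Unset Printing Implicit Defensive.
Import Order.TTheory GRing.Theory Num.Theory.

Definition simple_graph (T : finType) (e : rel T) : Prop :=
  symmetric e /\ irreflexive e.

Definition graph_connected (T : finType) (e : rel T) : Prop :=
  forall x y : T, connect e x y.

Definition deg (T : finType) (e : rel T) (x : T) : nat := #|[set y | e x y]|.

Definition is_dist (T : finType) (e : rel T) (u v : T) (n : nat) : Prop :=
  (exists p : seq T, [&& path e u p, last u p == v & size p == n]) /\
  (forall p : seq T, path e u p -> last u p = v -> (n <= size p)%N).

Local Open Scope ring_scope.

(* sum over edges u ~ v of (f u - f v)^2; each unordered edge is counted once,
   hence the 1/2 in front of the sum over ordered adjacent pairs *)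
Definition edge_energy (R : realFieldType) (T : finType) (e : rel T) (f : T -> R) : R :=
  2^-1 * \sum_(x : T) \sum_(y : T | e x y) (f x - f y) ^+ 2.

Definition weighted_norm (R : realFieldType) (T : finType) (e : rel T) (f : T -> R) : R :=
  \sum_(x : T) f x ^+ 2 * (deg e x)%:R.

Definition rayleigh (R : realFieldType) (T : finType) (e : rel T) (f : T -> R) : R :=
  edge_energy e f / weighted_norm e f.

Definition admissible (R : realFieldType) (T : finType) (e : rel T) (f : T -> R) : Prop :=
  (exists x, f x != 0) /\ \sum_(x : T) f x * (deg e x)%:R = 0.

Definition is_lambda1 (R : realFieldType) (T : finType) (e : rel T) (l : R) : Prop :=
  (forall g : T -> R, admissible e g -> l <= rayleigh e g) /\
  (forall eps : R, 0 < eps -> exists g : T -> R, admissible e g /\ rayleigh e g < l + eps).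

Definition harmonic_eigenfunction (R : realFieldType) (T : finType) (e : rel T)
    (l : R) (f : T -> R) : Prop :=
  admissible e f /\ rayleigh e f = l.

Definition volP (R : realFieldType) (T : finType) (e : rel T) (f : T -> R) : R :=
  (\sum_(z : T | 0 <= f z) deg e z)%:R.

Definition volN (R : realFieldType) (T : finType) (e : rel T) (f : T -> R) : R :=
  (\sum_(z : T | f z < 0) deg e z)%:R.

(** Let [P] be the weighted mass [sum_{f z >= 0} f z d(z)] of the nonnegative
    part of [f]. Since [sum f d = 0], the negative part has mass [-P], hence
    [sum f^2 d <= (max f - min f) P]; and [P <= max f * volP], [P <= - min f * volN]
    give by AM-GM [2 P <= (max f - min f) sqrt(volP volN)]. Along a shortest
    path from [u] to [v], Cauchy-Schwarz bounds [(max f - min f)^2] by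
    [dist(u,v)] times the edge energy. Altogether
    [2 sum f^2 d <= dist(u,v) sqrt(volP volN) * energy]. *)
From HB Require Import structures.
From mathcomp Require Import all_boot all_order all_algebra.
From mathcomp Require Import ring lra zify.
Import Order.TTheory GRing.Theory Num.Theory.
Set Implicit Arguments. Unset Strict Implicit. Unset Printing Implicit Defensive.
Local Open Scope ring_scope.

Lemma size_shorten (T : eqType) (x : T) (p : seq T) :
  (size (shorten x p) <= size p)%N.
Proof.
elim: p x => [|y p IH] x //=.
by case: ifP => _ /=; [exact: leq_trans (IH x) (leqnSn _) | rewrite ltnS].
Qed.

Lemma sqr_sum_le_card (R : realFieldType) (I : finType) (a : I -> R) :
  (\sum_i a i) ^+ 2 <= #|I|%:R * \sum_i a i ^+ 2.
Proof.
set S := \sum_i a i; set Q := \sum_i a i ^+ 2.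
have : 0 <= \sum_i \sum_j (a i - a j) ^+ 2.
  by apply: sumr_ge0 => i _; apply: sumr_ge0 => j _; exact: sqr_ge0.
have -> : \sum_i \sum_j (a i - a j) ^+ 2 =
          \sum_i (#|I|%:R * a i ^+ 2 + Q - 2 * (a i * S)).
  apply: eq_bigr => i _.
  rewrite (eq_bigr (fun j => a i ^+ 2 + a j ^+ 2 - 2 * (a i * a j))); last first.
    by move=> j _; ring.
  rewrite sumrB big_split /= sumr_const -mulr_sumr -mulr_sumr -/S -/Q.
  by rewrite [#|I|%:R * _]mulr_natl.
rewrite sumrB big_split /= sumr_const -mulr_sumr -mulr_sumr -mulr_suml -/S -/Q.
rewrite -mulr_natl; lra.
Qed.

Lemma sqr_telescope_le (R : realFieldType) (y : nat -> R) (n : nat) :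
  (y n - y 0%N) ^+ 2 <= n%:R * \sum_(i < n) (y i.+1 - y i) ^+ 2.
Proof.
have := sqr_sum_le_card (fun i : 'I_n => y i.+1 - y i).
by rewrite card_ord -(big_mkord xpredT (fun i => y i.+1 - y i)) telescope_sumr.
Qed.

Lemma ler_sum_subset (R : numDomainType) (I : finType) (A : {pred I})
    (P : pred I) (F : I -> R) :
  (forall i, 0 <= F i) -> (forall i, i \in A -> P i) ->
  \sum_(i in A) F i <= \sum_(i | P i) F i.
Proof.
move=> F0 AP; rewrite [leRHS](bigID (mem A)) /= -[leLHS]addr0 lerD ?sumr_ge0 //.
by under [leRHS]eq_bigl => i do rewrite (andb_idl (@AP i)).
Qed.

Section EdgeEnergy.

Variables (R : realFieldType) (T : finType) (e : rel T) (f : T -> R).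

Lemma edge_energy_ge0 : 0 <= edge_energy e f.
Proof.
rewrite mulr_ge0 ?invr_ge0 ?ler0n //.
by apply: sumr_ge0 => x _; apply: sumr_ge0 => y _; apply: sqr_ge0.
Qed.

Hypothesis esym : symmetric e.

(* [h] lists every step of the path in both orientations; for an injective
   path these ordered adjacent pairs are distinct, so their sum is at most the
   sum over all ordered adjacent pairs, which is twice the energy. *)
Lemma steps_energy_le (x : nat -> T) (n : nat) :
  {in [pred i | (i <= n)%N] &, injective x} ->
  (forall i, (i < n)%N -> e (x i) (x i.+1)) ->
  \sum_(i < n) (f (x i.+1) - f (x i)) ^+ 2 <= edge_energy e f.
Proof.
move=> xinj xe.
pose g (z : T * T) := (f z.1 - f z.2) ^+ 2.
pose h (k : 'I_n * bool) := (x (k.1 + ~~ k.2)%N, x (k.1 + k.2)%N).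
have hinj : injective h.
  have le_n (i : 'I_n) (b : bool) : (i + b <= n)%N.
    by case: b; rewrite ?addn0 ?addn1 // ltnW.
  have xinj' (i j : 'I_n) (b c : bool) : x (i + b)%N = x (j + c)%N -> (i + b = j + c)%N.
    by apply: xinj; rewrite inE le_n.
  move=> [i b] [j c] [/xinj' E1 /xinj' E2].
  have eij : i = j by apply: val_inj; move: E1 E2; case: b; case: c => /=; lia.
  by rewrite eij in E2 *; move: E2 {E1}; case: b; case: c => // /addnI.
have double : \sum_k g (h k) = 2 * \sum_(i < n) (f (x i.+1) - f (x i)) ^+ 2.
  rewrite -(pair_bigA _ (fun i b => g (h (i, b)))) mulr_sumr.
  by apply: eq_bigr => i _; rewrite big_bool /g /h /= addn0 addn1; ring.
have : \sum_k g (h k) <= \sum_(z | e z.1 z.2) g z.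
  rewrite -(big_imset g (in2W hinj)) /=.
  apply: ler_sum_subset => [z|z /imsetP[[i b] _ ->]]; first exact: sqr_ge0.
  by rewrite /h; case: b; rewrite /= ?addn0 ?addn1; [|rewrite esym]; exact: xe.
rewrite double /edge_energy.
by rewrite (pair_big_dep xpredT (fun x y => e x y) (fun x y => g (x, y))) /=; lra.
Qed.

Lemma dist_energy_bound (u v : T) (n : nat) :
  is_dist e u v n -> (f v - f u) ^+ 2 <= n%:R * edge_energy e f.
Proof.
case=> -[p /and3P[pe /eqP pv /eqP sp]] minimal.
case: (shortenP pe) (size_shorten u p) pv => q qe uq _ sq qv.
have {}sq : size q = n by apply/eqP; rewrite eqn_leq (minimal q qe qv) -sp sq.
pose x i := nth u (u :: q) i.
have xn : x n = v by rewrite /x -sq -qv -[size q]/((size (u :: q)).-1) nth_last.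
have := sqr_telescope_le (f \o x) n; rewrite /= xn => /le_trans; apply.
rewrite ler_wpM2l ?ler0n //; apply: steps_energy_le.
- by move=> i j; rewrite !inE => ilt jlt /eqP; rewrite nth_uniq //= ?sq ?ltnS // => /eqP.
- by move=> i lt; move/(pathP u): qe => /(_ i); rewrite sq => /(_ lt).
Qed.

End EdgeEnergy.

Lemma deg_gt0 (T : finType) (e : rel T) (x : T) :
  graph_connected e -> (1 < #|T|)%N -> (0 < deg e x)%N.
Proof.
move=> conn /card_gt1P[a [b [_ _ ab]]].
have [y yx] : exists y, y != x.
  by exists (if a == x then b else a); case: (a =P x) => [ax|/eqP //]; rewrite -ax eq_sym.
have /connectP[[|z p] /= xp xy] := conn x y; first by rewrite xy eqxx in yx.
by apply/card_gt0P; exists z; rewrite inE; case/andP: xp.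
Qed.

Lemma weighted_norm_gt0 (R : realFieldType) (T : finType) (e : rel T)
    (f : T -> R) (x : T) :
  (0 < deg e x)%N -> f x != 0 -> 0 < weighted_norm e f.
Proof.
move=> dx fx; rewrite /weighted_norm (bigD1 x) //= ltr_wpDr //.
  by apply: sumr_ge0 => z _; rewrite mulr_ge0 ?sqr_ge0 ?ler0n.
by rewrite mulr_gt0 ?ltr0n // lt_def sqrf_eq0 fx sqr_ge0.
Qed.

Lemma sum_split_sign (R : realDomainType) (T : finType) (f F : T -> R) :
  \sum_z F z = \sum_(z | 0 <= f z) F z + \sum_(z | f z < 0) F z.
Proof.
rewrite (bigID (fun z => 0 <= f z)) /=; congr (_ + _).
by apply: eq_bigl => z; rewrite ltNge.
Qed.

Definition pos_mass (R : realFieldType) (T : finType) (e : rel T) (f : T -> R) : R :=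
  \sum_(z | 0 <= f z) f z * (deg e z)%:R.

Lemma pos_mass_ge0 (R : realFieldType) (T : finType) (e : rel T) (f : T -> R) :
  0 <= pos_mass e f.
Proof. by apply: sumr_ge0 => z fz; rewrite mulr_ge0 ?ler0n. Qed.

Section BalancedFunction.

Variables (R : realFieldType) (T : finType) (e : rel T) (f : T -> R) (u v : T).
Hypotheses (fu_min : forall z, f u <= f z) (fv_max : forall z, f z <= f v).
Hypothesis balanced : \sum_z f z * (deg e z)%:R = 0.

Lemma neg_mass_eq : \sum_(z | f z < 0) f z * (deg e z)%:R = - pos_mass e f.
Proof. by apply/eqP; rewrite -addr_eq0 addrC /pos_mass -sum_split_sign balanced. Qed.

Lemma weighted_norm_le_pos_mass : weighted_norm e f <= (f v - f u) * pos_mass e f.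
Proof.
rewrite /weighted_norm (sum_split_sign f) mulrBl -mulrN -neg_mass_eq.
rewrite /pos_mass !mulr_sumr lerD //; apply: ler_sum => z fz;
  rewrite mulrA ler_wpM2r ?ler0n // expr2.
  exact: (ler_wpM2r fz (fv_max z)).
exact: (ler_wnM2r (ltW fz) (fu_min z)).
Qed.

Lemma pos_mass_le_volP : pos_mass e f <= f v * volP e f.
Proof.
rewrite /pos_mass /volP natr_sum mulr_sumr.
by apply: ler_sum => z _; rewrite ler_wpM2r ?ler0n.
Qed.

Lemma pos_mass_le_volN : pos_mass e f <= - f u * volN e f.
Proof.
rewrite -[pos_mass e f]opprK -neg_mass_eq mulNr lerN2 /volN natr_sum mulr_sumr.
by apply: ler_sum => z _; rewrite ler_wpM2r ?ler0n.
Qed.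

End BalancedFunction.

(* AM-GM: [4 a b <= (a + b)^2]. *)
Lemma amgm_sqrt_le (R : rcfType) (a b y z p : R) :
  0 <= a + b -> 0 <= y -> 0 <= z -> 0 <= p -> p <= a * y -> p <= b * z ->
  2 * p <= (a + b) * Num.sqrt (y * z).
Proof.
move=> ab0 y0 z0 p0 pay pbz.
have yz0 := mulr_ge0 y0 z0.
rewrite -(ler_pXn2r (_ : 0 < 2)%N) ?nnegrE ?mulr_ge0 ?sqrtr_ge0 //.
rewrite !exprMn sqr_sqrtr //.
have := ler_pM p0 p0 pay pbz; have := mulr_ge0 (sqr_ge0 (a - b)) yz0; nra.
Qed.

Section RangeBound.

Variables (R : rcfType) (T : finType) (e : rel T) (f : T -> R) (u v : T).
Hypotheses (fu_min : forall z, f u <= f z) (fv_max : forall z, f z <= f v).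
Hypothesis balanced : \sum_z f z * (deg e z)%:R = 0.

Let s := Num.sqrt (volP e f * volN e f).

Lemma pos_mass_le_sqrt_vol : 2 * pos_mass e f <= (f v - f u) * s.
Proof.
apply: amgm_sqrt_le; rewrite ?ler0n ?pos_mass_ge0 ?subr_ge0 //.
  exact: pos_mass_le_volP.
exact: pos_mass_le_volN.
Qed.

Hypothesis esym : symmetric e.
Variable n : nat.
Hypothesis dist_uv : is_dist e u v n.

Lemma weighted_norm_le_energy : 2 * weighted_norm e f <= n%:R * s * edge_energy e f.
Proof.
have d0 : 0 <= f v - f u by rewrite subr_ge0.
have := weighted_norm_le_pos_mass fu_min fv_max balanced.
have := ler_wpM2l d0 pos_mass_le_sqrt_vol.
have := ler_wpM2r (sqrtr_ge0 (volP e f * volN e f)) (dist_energy_bound f esym dist_uv).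
rewrite -/s; nra.
Qed.

Lemma rayleigh_ge_dist_vol : 0 < weighted_norm e f -> 2 / (n%:R * s) <= rayleigh e f.
Proof.
move=> N0; have [->|ns0] := eqVneq (n%:R * s) 0.
  by rewrite invr0 mulr0 divr_ge0 ?edge_energy_ge0 ?ltW.
have nspos : 0 < n%:R * s by rewrite lt_def ns0 mulr_ge0 ?ler0n ?sqrtr_ge0.
rewrite ler_pdivlMr // mulrAC ler_pdivrMr // [_ * (_ * _)]mulrC.
exact: weighted_norm_le_energy.
Qed.

End RangeBound.

Theorem lemma2p2 (R : rcfType) (T : finType) (e : rel T)
    (Hsimple : simple_graph e) (Hconn : graph_connected e) (Hcard : (1 < #|T|)%N)
    (l : R) (Hl : is_lambda1 e l) (f : T -> R) (Hf : harmonic_eigenfunction e l f)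
    (u v : T) (Hu : forall z, f u <= f z) (Hv : forall z, f z <= f v)
    (n : nat) (Hn : is_dist e u v n) :
  2 / (n%:R * Num.sqrt (volP e f * volN e f)) <= l.
Proof.
case: Hsimple => esym _; case: Hf => -[[x fx] balanced] <-.
apply: (rayleigh_ge_dist_vol Hu Hv balanced esym Hn).
exact: (weighted_norm_gt0 (deg_gt0 x Hconn Hcard) fx).
Qed.
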